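(* Let $(L_x)_{x\in S}$ be an $S$-glued system with $S$-glued sum $L$. If every $L_x$ is semimodular, then $L$ is a semimodular lattice of finite length. If every $L_x$ is modular, then $L$ is a modular lattice of finite length.
   Context: Let $S$ be a lattice of finite length (every chain in $S$ is finite), with order $\le$, join $\vee$ and meet $\wedge$; $x\prec y$ means that $y$ covers $x$. An \emph{$S$-glued system} is a family $(L_x,\le_x)_{x\in S}$ of lattices of finite length (with join $+_x$, meet $\cdot_x$, least element $0_x$, greatest element $1_x$), whose underlying sets may overlap, such that for all $x,y\in S$: (1) if $x\le y$ and $L_x\cap L_y\ne\emptyset$, then $L_x\cap L_y$ is a filter of $L_x$ and an ideal of $L_y$; (2) in the situation of (1), for all $a,b\in L_x\cap L_y$: $a\le_x b$ iff $a\le_y b$; (3) if $x\prec y$ then $L_x\cap L_y\ne\emptyset$; (4) $L_x\cap L_y\subseteq L_{x\wedge y}\cap L_{x\vee y}$. The \emph{$S$-glued sum} of the system is the set $L=\bigcup_{x\in S}L_x$ equipped with the relation $\le$ defined as the transitive closure of $\bigcup_{x\in S}\le_x$; it is a lattice. A lattice $K$ of finite length is \emph{semimodular} if whenever $b\ne c$ both cover $a$ in $K$, then $b\vee c$ covers both $b$ and $c$. A lattice has finite length if all its chains are finite. *)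

From Stdlib Require Import List Relations.

Section Order.
Context {U : Type} (P : U -> Prop) (le : U -> U -> Prop).

Definition poset : Prop :=
  (forall a, P a -> le a a) /\
  (forall a b, P a -> P b -> le a b -> le b a -> a = b) /\
  (forall a b c, P a -> P b -> P c -> le a b -> le b c -> le a c).

Definition is_lub (a b j : U) : Prop :=
  P j /\ le a j /\ le b j /\ (forall z, P z -> le a z -> le b z -> le j z).

Definition is_glb (a b m : U) : Prop :=
  P m /\ le m a /\ le m b /\ (forall z, P z -> le z a -> le z b -> le z m).

Definition lattice : Prop :=
  poset /\ (exists a, P a) /\
  (forall a b, P a -> P b -> (exists j, is_lub a b j) /\ (exists m, is_glb a b m)).

Definition chain (C : U -> Prop) : Prop :=
  (forall a, C a -> P a) /\ (forall a b, C a -> C b -> le a b \/ le b a).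

Definition finite_set (C : U -> Prop) : Prop :=
  exists s : list U, forall a, C a -> In a s.

Definition finite_length : Prop :=
  forall C, chain C -> finite_set C.

Definition covers (a b : U) : Prop :=
  P a /\ P b /\ le a b /\ a <> b /\
  (forall z, P z -> le a z -> le z b -> z = a \/ z = b).

Definition semimodular : Prop :=
  forall a b c j, P a -> P b -> P c -> b <> c ->
    covers a b -> covers a c -> is_lub b c j -> covers b j /\ covers c j.

(* modular law: a <= c implies a v (b ^ c) = (a v b) ^ c *)
Definition modular : Prop :=
  forall a b c m j1 j2 m2, P a -> P b -> P c -> le a c ->
    is_glb b c m -> is_lub a m j1 -> is_lub a b j2 -> is_glb j2 c m2 -> j1 = m2.

Definition filter_of (F : U -> Prop) : Prop :=
  (exists a, F a) /\ (forall a, F a -> P a) /\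
  (forall a b, F a -> P b -> le a b -> F b) /\
  (forall a b m, F a -> F b -> is_glb a b m -> F m).

Definition ideal_of (I : U -> Prop) : Prop :=
  (exists a, I a) /\ (forall a, I a -> P a) /\
  (forall a b, I a -> P b -> le b a -> I b) /\
  (forall a b j, I a -> I b -> is_lub a b j -> I j).

End Order.

Definition fullset {S : Type} : S -> Prop := fun _ => True.

(* An S-glued system: the lattice S is given by (fullset, leS);
   the lattice L_x has carrier Lc x : U -> Prop and order le x. *)
Definition glued_system {S U : Type} (leS : S -> S -> Prop)
    (Lc : S -> U -> Prop) (le : S -> U -> U -> Prop) : Prop :=
  (forall x, lattice (Lc x) (le x) /\ finite_length (Lc x) (le x)) /\
  (forall x y, leS x y -> (exists a, Lc x a /\ Lc y a) ->
     filter_of (Lc x) (le x) (fun a => Lc x a /\ Lc y a) /\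
     ideal_of (Lc y) (le y) (fun a => Lc x a /\ Lc y a)) /\
  (forall x y a b, leS x y -> Lc x a -> Lc y a -> Lc x b -> Lc y b ->
     (le x a b <-> le y a b)) /\
  (forall x y, covers fullset leS x y -> exists a, Lc x a /\ Lc y a) /\
  (forall x y m j a, is_glb fullset leS x y m -> is_lub fullset leS x y j ->
     Lc x a -> Lc y a -> Lc m a /\ Lc j a).

Definition glued_carrier {S U : Type} (Lc : S -> U -> Prop) : U -> Prop :=
  fun a => exists x, Lc x a.

Definition glued_le {S U : Type} (Lc : S -> U -> Prop) (le : S -> U -> U -> Prop)
  : U -> U -> Prop :=
  clos_trans U (fun a b => exists x, Lc x a /\ Lc x b /\ le x a b).

(* For a in L_x and an index q >= x, climbing a chain of covers from x to q and joining at
   each step with the bottom of the target level yields the least element of L_q above a in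
   the glued order ([lift], [lift_least]).  Hence the join of a in L_x and b in L_y is the
   join, inside L_(x v y), of the lifts of a and b; meets are joins of the glued sum of the
   dual system, which is the dual of the glued sum.  Two elements of a common level compare
   there, every cover of the glued sum lies inside a single level, and the least indices of
   the levels meeting a chain form a chain of S: this gives finite length and carries
   semimodularity over from the levels.  Finally a lattice of finite length that is both
   upper and lower semimodular is modular: a failure of the modular law yields a pentagon
   one of whose sides is a cover, and the two semimodularities rule such pentagons out. *)

From Stdlib Require Import List Relations.
From Stdlib Require Import Classical ClassicalEpsilon Lia FunctionalExtensionality PropExtensionality.

Notation dual R := (fun a b => R b a).

Section Order.
Context {U : Type} (P : U -> Prop) (le : U -> U -> Prop).

Lemma poset_dual : poset P le -> poset P (dual le).
Proof. intros (Hrefl & Hanti & Htrans). repeat split; eauto. Qed.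

Lemma finite_length_dual : finite_length P le -> finite_length P (dual le).
Proof. intros Hfl C [HCP HCcmp]. apply Hfl. split; auto. Qed.

Lemma lattice_dual : lattice P le -> lattice P (dual le).
Proof.
  intros (Hpo & Hne & Hbin). split; [now apply poset_dual | split; [exact Hne |]].
  intros a b Ha Hb. destruct (Hbin a b Ha Hb) as [Hj Hm]. now split.
Qed.

Lemma covers_dual a b : covers P le a b -> covers P (dual le) b a.
Proof.
  intros (Ha & Hb & Hab & Hne & Hbetween). repeat split; auto.
  intros z Hz Hbz Hza. destruct (Hbetween z Hz Hza Hbz); auto.
Qed.

Lemma lub_comm a b j : is_lub P le a b j -> is_lub P le b a j.
Proof. intros (Hj & Haj & Hbj & Hleast). repeat split; auto. Qed.

Lemma lub_unique a b j j' :
  poset P le -> is_lub P le a b j -> is_lub P le a b j' -> j = j'.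
Proof.
  intros (_ & Hanti & _) (Hj & Haj & Hbj & Hleast) (Hj' & Haj' & Hbj' & Hleast').
  apply Hanti; auto.
Qed.

Lemma lub_of_le a b : poset P le -> P a -> P b -> le a b -> is_lub P le a b b.
Proof. intros (Hrefl & _ & _) Ha Hb Hab. repeat split; auto. Qed.

Lemma lub_absorb a b b' j' j :
  poset P le -> P a -> P b' -> P b -> is_lub P le a b' j' -> le b' b -> is_lub P le j' b j ->
  is_lub P le a b j.
Proof.
  intros (Hrefl & Hanti & Htrans) Ha Hb' Hb (Hj' & Haj' & Hb'j' & Hleast') Hb'b (Hj & Hj'j & Hbj & Hleast).
  repeat split; eauto.
Qed.

Lemma lub_of_lub_le u v w a b :
  poset P le -> P u -> P v -> P w -> le u v -> is_lub P le u w a -> is_lub P le v w b ->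
  is_lub P le a v b.
Proof.
  intros (Hrefl & Hanti & Htrans) Hu Hv Hw Huv (Ha & Hua & Hwa & Hleasta) (Hb & Hvb & Hwb & Hleastb).
  repeat split; eauto.
Qed.

Lemma lub_of_joins_with a b o u v a' b' :
  poset P le -> P a -> P b -> P o ->
  is_lub P le a b u -> is_lub P le u o v -> is_lub P le a o a' -> is_lub P le b o b' ->
  is_lub P le a' b' v.
Proof.
  intros (Hrefl & Hanti & Htrans) Ha Hb Ho (Hu & Hau & Hbu & Hleastu) (Hv & Huv & Hov & Hleastv)
    (Ha' & Haa' & Hoa' & Hleasta') (Hb' & Hbb' & Hob' & Hleastb').
  repeat split; eauto 6.
Qed.

Lemma lub_between a b j x :
  poset P le -> P a -> P x -> is_lub P le a b j -> le a x -> le x j -> is_lub P le x b j.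
Proof.
  intros (Hrefl & Hanti & Htrans) Ha Hx (Hj & Haj & Hbj & Hleast) Hax Hxj.
  repeat split; eauto.
Qed.

Lemma not_covers_between a b :
  P a -> P b -> le a b -> a <> b -> ~ covers P le a b ->
  exists z, P z /\ le a z /\ le z b /\ z <> a /\ z <> b.
Proof.
  intros Ha Hb Hab Hne Hnc. apply NNPP. intros Hnz. apply Hnc.
  repeat split; auto. intros z Hz Haz Hzb.
  destruct (classic (z = a)); auto. destruct (classic (z = b)); auto.
  exfalso. apply Hnz. exists z. auto.
Qed.

Lemma lattice_has_join a b : lattice P le -> P a -> P b -> exists j, is_lub P le a b j.
Proof. intros (_ & _ & Hbin) Ha Hb. apply Hbin; auto. Qed.

Lemma lattice_has_meet a b : lattice P le -> P a -> P b -> exists m, is_glb P le a b m.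
Proof. intros (_ & _ & Hbin) Ha Hb. apply Hbin; auto. Qed.

Lemma filter_of_ext (F F' : U -> Prop) :
  (forall a, F a <-> F' a) -> filter_of P le F -> filter_of P le F'.
Proof.
  intros HF ([a Ha] & HFP & Hup & Hmeet). repeat split.
  - exists a. now apply HF.
  - intros b Hb. now apply HFP, HF.
  - intros b c Hb Hc Hbc. apply HF. apply (Hup b c); auto. now apply HF.
  - intros b c m Hb Hc Hm. apply HF. apply (Hmeet b c m); auto; now apply HF.
Qed.

End Order.

Lemma glb_comm {U : Type} (P : U -> Prop) (le : U -> U -> Prop) a b m :
  is_glb P le a b m -> is_glb P le b a m.
Proof. exact (lub_comm P (dual le) a b m). Qed.

Lemma modular_dual {U : Type} (P : U -> Prop) (le : U -> U -> Prop) :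
  modular P le -> modular P (dual le).
Proof.
  intros Hmod a b c m j1 j2 m2 Ha Hb Hc Hca Hm Hj1 Hj2 Hm2. symmetry.
  apply (Hmod c b a j2 m2 m j1); auto using lub_comm, glb_comm.
Qed.

(** * Finite length *)

Definition strict_lt {U : Type} (P : U -> Prop) (le : U -> U -> Prop) (b a : U) : Prop :=
  P b /\ P a /\ le b a /\ b <> a.

Section FiniteLength.
Context {U : Type} (P : U -> Prop) (le : U -> U -> Prop).
Hypothesis (Hpo : poset P le) (Hfl : finite_length P le).

Lemma no_infinite_descent (g : nat -> U) : ~ (forall n, strict_lt P le (g (S n)) (g n)).
Proof.
  destruct Hpo as (Hrefl & Hanti & Htrans). intros Hdesc.
  assert (HP : forall n, P (g n)) by (intro n; apply (Hdesc n)).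
  assert (Hmono : forall k m, le (g (k + m)) (g m)).
  { induction k as [|k IH]; intro m; [now apply Hrefl|].
    apply Htrans with (g (k + m)); auto. apply (Hdesc (k + m)). }
  assert (Hinj : forall m n, m < n -> g n <> g m).
  { intros m n Hmn E. destruct (Hdesc m) as (_ & _ & Hle & Hne). apply Hne, Hanti; auto.
    replace n with (n - S m + S m) in E by lia. rewrite <- E. apply Hmono. }
  destruct (Hfl (fun a => exists n, a = g n)) as [s Hs].
  { split; [intros a [n ->]; apply HP |].
    intros a b [m ->] [n ->]. assert (m <= n \/ n <= m) as [Hmn|Hnm] by lia.
    - right. replace n with (n - m + m) by lia. apply Hmono.
    - left. replace m with (m - n + n) by lia. apply Hmono. }
  assert (Hnd : NoDup (map g (seq 0 (S (length s))))).
  { apply NoDup_map_NoDup_ForallPairs; [| apply seq_NoDup].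
    intros m n _ _ E. assert (m < n \/ m = n \/ n < m) as [H|[H|H]] by lia; auto;
      exfalso; [apply (Hinj m n) | apply (Hinj n m)]; auto. }
  apply NoDup_incl_length with (l' := s) in Hnd.
  - rewrite length_map, length_seq in Hnd. lia.
  - intros a Hin. apply in_map_iff in Hin as [n [<- _]]. apply Hs. eauto.
Qed.

Lemma strict_lt_wf : well_founded (strict_lt P le).
Proof.
  intros a0. apply NNPP. intros Hna0.
  assert (Hnext : forall a : {a | ~ Acc (strict_lt P le) a},
             {b : {b | ~ Acc (strict_lt P le) b} | strict_lt P le (proj1_sig b) (proj1_sig a)}).
  { intros [a Hna]. apply constructive_indefinite_description. apply NNPP. intros Hnb.
    apply Hna. constructor. intros b Hb. apply NNPP. intros Hnab. apply Hnb.
    now exists (exist _ b Hnab). }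
  pose (f := fix f n := match n with 0 => exist _ a0 Hna0 | S n => proj1_sig (Hnext (f n)) end).
  apply (no_infinite_descent (fun n => proj1_sig (f n))).
  intro n. exact (proj2_sig (Hnext (f n))).
Qed.

Lemma finite_length_lt_ind (Q : U -> Prop) :
  (forall a, P a -> (forall b, P b -> le b a -> b <> a -> Q b) -> Q a) ->
  forall a, P a -> Q a.
Proof.
  intros Hstep a. induction a as [a IH] using (well_founded_ind strict_lt_wf).
  intros Ha. apply Hstep; auto. intros b Hb Hba Hne. apply IH; repeat split; auto.
Qed.

End FiniteLength.

Section Covers.
Context {U : Type} (P : U -> Prop) (le : U -> U -> Prop).
Hypothesis (Hpo : poset P le) (Hfl : finite_length P le).

Lemma finite_length_gt_ind (Q : U -> Prop) :
  (forall a, P a -> (forall b, P b -> le a b -> b <> a -> Q b) -> Q a) ->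
  forall a, P a -> Q a.
Proof. exact (finite_length_lt_ind P (dual le) (poset_dual P le Hpo) (finite_length_dual P le Hfl) Q). Qed.

Lemma exists_cover_below a b :
  P a -> P b -> le a b -> a <> b -> exists t, le a t /\ covers P le t b.
Proof.
  pose proof Hpo as (Hrefl & Hanti & Htrans). intros Ha Hb Hab Hne.
  enough (Hgen : forall t, P t -> le a t -> le t b -> t <> b ->
                   exists t', le a t' /\ covers P le t' b) by (apply (Hgen a); auto).
  apply (finite_length_gt_ind
           (fun t => le a t -> le t b -> t <> b -> exists t', le a t' /\ covers P le t' b)).
  intros t Ht IH Hat Htb Htne.
  destruct (classic (covers P le t b)) as [Hc|Hnc]; [now exists t |].
  destruct (not_covers_between P le t b) as (z & Hz & Htz & Hzb & Hzt & Hzne); auto.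
  apply (IH z); eauto.
Qed.

Lemma lattice_has_bottom : lattice P le -> exists o, P o /\ forall z, P z -> le o z.
Proof.
  intros Hlat. pose proof Hlat as (_ & [a0 Ha0] & _).
  enough (Hgen : forall a, P a -> exists o, P o /\ forall z, P z -> le o z) by eauto.
  apply (finite_length_lt_ind P le Hpo Hfl). intros a Ha IH.
  destruct (classic (forall z, P z -> le a z)) as [Hbot|Hnbot]; [now exists a |].
  apply not_all_ex_not in Hnbot as [z Hz]. apply imply_to_and in Hz as [Hz Hnaz].
  destruct (lattice_has_meet P le a z Hlat Ha Hz) as [m (Hm & Hma & Hmz & _)].
  apply (IH m Hm Hma). intros ->. contradiction.
Qed.

End Covers.

Lemma exists_cover_above {U : Type} (P : U -> Prop) (le : U -> U -> Prop) a b :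
  poset P le -> finite_length P le ->
  P a -> P b -> le a b -> a <> b -> exists t, covers P le a t /\ le t b.
Proof.
  intros Hpo Hfl Ha Hb Hab Hne.
  destruct (exists_cover_below P (dual le) (poset_dual P le Hpo) (finite_length_dual P le Hfl) b a)
    as (t & Htb & Hc); auto.
  exists t. split; [exact (covers_dual P (dual le) t a Hc) | exact Htb].
Qed.

(** * Semimodular and modular lattices *)

Section UpperSemimodular.
Context {U : Type} (P : U -> Prop) (le : U -> U -> Prop).
Hypothesis (Hlat : lattice P le) (Hfl : finite_length P le) (Hsm : semimodular P le).

Let Hpo : poset P le := proj1 Hlat.

Lemma semimodular_cover_join u v t j :
  covers P le u v -> P t -> le u t -> ~ le v t -> is_lub P le t v j -> covers P le t j.
Proof.
  intros Huv. pose proof Huv as (Hu & Hv & Hle_uv & Hne_uv & _).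
  pose proof Hpo as (Hrefl & Hanti & Htrans).
  revert t j. enough (Hgen : forall t, P t -> le u t -> ~ le v t ->
                         forall j, is_lub P le t v j -> covers P le t j) by auto.
  apply (finite_length_lt_ind P le Hpo Hfl
           (fun t => le u t -> ~ le v t -> forall j, is_lub P le t v j -> covers P le t j)).
  intros t Ht IH Hut Hvt j Hj.
  destruct (classic (t = u)) as [->|Htu].
  { now rewrite (lub_unique P le u v j v Hpo Hj (lub_of_le P le u v Hpo Hu Hv Hle_uv)). }
  (* induction step: go down one cover t' < t and use semimodularity at t' *)
  destruct (exists_cover_below P le Hpo Hfl u t) as (t' & Hut' & Ht't); auto.
  pose proof Ht't as (Ht' & _ & Hle_t't & Hne_t't & _).
  assert (Hvt' : ~ le v t') by (intro; apply Hvt; eauto).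
  destruct (lattice_has_join P le t' v Hlat Ht' Hv) as [j' Hj'].
  assert (Ht'j' := IH t' Ht' Hle_t't Hne_t't Hut' Hvt' j' Hj').
  pose proof Ht'j' as (_ & Hj'P & _).
  destruct (lattice_has_join P le t j' Hlat Ht Hj'P) as [j'' Hj''].
  assert (Htj' : t <> j') by (intros ->; apply Hvt; exact (proj1 (proj2 (proj2 Hj')))).
  destruct (Hsm t' t j' j'') as [Htj'' _]; auto.
  assert (Hj''_tv : is_lub P le t v j'').
  { apply lub_comm, (lub_absorb P le v t t' j' j''); auto.
    - now apply lub_comm.
    - now apply lub_comm. }
  now rewrite (lub_unique P le t v j j'' Hpo Hj Hj''_tv).
Qed.

Lemma semimodular_join_cover u v w a b :
  covers P le u v -> P w -> is_lub P le u w a -> is_lub P le v w b ->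
  a = b \/ covers P le a b.
Proof.
  pose proof Hpo as (Hrefl & Hanti & Htrans).
  intros Huv Hw Ha Hb. pose proof Huv as (Hu & Hv & Hle_uv & _).
  pose proof Ha as (Ha' & Hua & Hwa & Hleasta). pose proof Hb as (Hb' & Hvb & Hwb & Hleastb).
  destruct (classic (le v a)) as [Hva|Hva].
  - left. apply Hanti; eauto.
  - right. apply (semimodular_cover_join u v a b Huv); auto.
    exact (lub_of_lub_le P le u v w a b Hpo Hu Hv Hw Hle_uv Ha Hb).
Qed.

End UpperSemimodular.

Lemma glb_between {U : Type} (P : U -> Prop) (le : U -> U -> Prop) a b m x :
  poset P le -> P a -> P x -> is_glb P le a b m -> le x a -> le m x -> is_glb P le x b m.
Proof. intros Hpo. exact (lub_between P (dual le) a b m x (poset_dual P le Hpo)). Qed.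

Section Modular.
Context {U : Type} (P : U -> Prop) (le : U -> U -> Prop).
Hypothesis (Hlat : lattice P le) (Hfl : finite_length P le).
Hypothesis (Hsm : semimodular P le) (Hsm_dual : semimodular P (dual le)).

Let Hpo : poset P le := proj1 Hlat.

Lemma semimodular_meet_cover u v w a b :
  covers P le u v -> P w -> is_glb P le u w a -> is_glb P le v w b ->
  a = b \/ covers P le a b.
Proof.
  intros Huv Hw Ha Hb.
  destruct (semimodular_join_cover P (dual le) (lattice_dual P le Hlat)
              (finite_length_dual P le Hfl) Hsm_dual v u w b a) as [E|Hc]; auto.
  - exact (covers_dual P le u v Huv).
  - right. exact (covers_dual P (dual le) b a Hc).
Qed.

Lemma join_cover_of_meet_cover o b x x' :
  covers P le o b -> P x -> is_glb P le x b o -> is_lub P le x b x' -> covers P le x x'.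
Proof.
  pose proof Hpo as (Hrefl & Hanti & Htrans).
  intros Hob Hx Hm Hj. pose proof Hob as (Ho & Hb & Hle_ob & Hne_ob & _).
  destruct (semimodular_join_cover P le Hlat Hfl Hsm o b x x x') as [Hxx'|Hc]; auto.
  - exact (lub_of_le P le o x Hpo Ho Hx (proj1 (proj2 Hm))).
  - now apply lub_comm.
  - exfalso. subst x'. apply Hne_ob, Hanti; auto. apply Hm; auto. apply Hj.
Qed.

Lemma meet_of_cover_join x x' b o b' p :
  covers P le x x' -> P b -> is_glb P le x b o -> is_glb P le x' b p ->
  covers P le o b' -> le b' x' -> le b' b -> p = b'.
Proof.
  pose proof Hpo as (Hrefl & Hanti & Htrans).
  intros Hxx' Hb Hmx Hmx' Hob' Hb'x' Hb'b. pose proof Hob' as (Ho & Hb' & Hle_ob' & Hne_ob' & Hbetween).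
  assert (Hb'p : le b' p) by (apply Hmx'; auto).
  destruct (semimodular_meet_cover x x' b o p Hxx' Hb Hmx Hmx') as [Hop|Hop].
  - subst p. exfalso. apply Hne_ob', Hanti; auto.
  - pose proof Hop as (_ & Hp & _ & _ & Hbetween_op).
    destruct (Hbetween_op b' Hb' Hle_ob' Hb'p) as [-> | ->]; [contradiction | reflexivity].
Qed.

(* A pentagon whose short side x < y is a cover: induct on b downwards and on o = x ^ b upwards. *)
Lemma no_pentagon_cover : forall b, P b -> forall o, P o -> forall x y i,
  covers P le x y -> is_glb P le x b o -> is_glb P le y b o ->
  is_lub P le x b i -> is_lub P le y b i -> False.
Proof.
  pose proof Hpo as (Hrefl & Hanti & Htrans).
  refine (finite_length_lt_ind P le Hpo Hfl _ _). intros b Hb IHb.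
  refine (finite_length_gt_ind P le Hpo Hfl _ _). intros o Ho IHo x y i Hxy Hmx Hmy Hjx Hjy.
  pose proof Hxy as (Hx & Hy & Hle_xy & Hne_xy & Hbetween_xy).
  pose proof Hmx as (_ & Hox & Hob & _). pose proof Hjy as (Hi & Hyi & Hbi & _).
  assert (Hne_ob : o <> b).
  { intros ->. apply Hne_xy, Hanti; auto. apply Htrans with i; auto. apply Hjx; auto. }
  destruct (exists_cover_above P le o b Hpo Hfl) as (b' & Hob' & Hb'b); auto.
  pose proof Hob' as (_ & Hb' & Hle_ob' & Hne_ob' & _).
  assert (Hmx' : is_glb P le x b' o)
    by (apply glb_comm, (glb_between P le b x o b'); auto using glb_comm).
  assert (Hmy' : is_glb P le y b' o)
    by (apply glb_comm, (glb_between P le b y o b'); auto using glb_comm).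
  destruct (classic (b' = b)) as [->|Hne_b'b].
  - assert (Hxi : covers P le x i) by exact (join_cover_of_meet_cover o b x i Hob' Hx Hmx Hjx).
    destruct (proj2 (proj2 (proj2 (proj2 Hxi))) y Hy Hle_xy Hyi) as [-> | ->].
    + now apply Hne_xy.
    + apply Hne_ob, Hanti; auto. apply Hmy; auto.
  - destruct (lattice_has_join P le x b' Hlat Hx Hb') as [x' Hx'].
    destruct (lattice_has_join P le y b' Hlat Hy Hb') as [y' Hy'].
    destruct (classic (x' = y')) as [Hx'y'|Hne_x'y'].
    { subst y'. apply (IHb b' Hb' Hb'b Hne_b'b o Ho x y x'); auto. }
    destruct (semimodular_join_cover P le Hlat Hfl Hsm x y b' x' y' Hxy Hb' Hx' Hy')
      as [E|Hx'y']; [contradiction |].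
    assert (Hxx' := join_cover_of_meet_cover o b' x x' Hob' Hx Hmx' Hx').
    assert (Hyy' := join_cover_of_meet_cover o b' y y' Hob' Hy Hmy' Hy').
    destruct (lattice_has_meet P le x' b Hlat (proj1 Hx') Hb) as [px Hpx].
    destruct (lattice_has_meet P le y' b Hlat (proj1 Hy') Hb) as [py Hpy].
    assert (Hpx_b' := meet_of_cover_join x x' b o b' px Hxx' Hb Hmx Hpx Hob' (proj1 (proj2 (proj2 Hx'))) Hb'b).
    assert (Hpy_b' := meet_of_cover_join y y' b o b' py Hyy' Hb Hmy Hpy Hob' (proj1 (proj2 (proj2 Hy'))) Hb'b).
    subst px py.
    apply (IHo b' Hb' Hle_ob' (not_eq_sym Hne_ob') x' y' i Hx'y' Hpx Hpy).
    + apply (lub_of_lub_le P le b' b x x' i Hpo); auto using lub_comm.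
    + apply (lub_of_lub_le P le b' b y y' i Hpo); auto using lub_comm.
Qed.

Lemma modular_of_semimodular_dual : modular P le.
Proof.
  pose proof Hpo as (Hrefl & Hanti & Htrans).
  intros a b c m j1 j2 m2 Ha Hb Hc Hac Hm Hj1 Hj2 Hm2.
  pose proof Hm as (Hm' & Hmb & Hmc & _). pose proof Hj1 as (Hj1' & Haj1 & Hmj1 & Hleast1).
  pose proof Hj2 as (Hj2' & Haj2 & Hbj2 & _). pose proof Hm2 as (Hm2' & Hm2j2 & Hm2c & Hgreatest2).
  assert (Hj1c : le j1 c) by (apply Hleast1; auto).
  assert (Hj1j2 : le j1 j2) by (apply Hleast1; eauto).
  assert (Hj1m2 : le j1 m2) by (apply Hgreatest2; auto).
  apply NNPP. intros Hne.
  (* a cover j1 < y <= m2 would give a pentagon with b *)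
  destruct (exists_cover_above P le j1 m2 Hpo Hfl) as (y & Hj1y & Hym2); auto.
  pose proof Hj1y as (_ & Hy & Hle_j1y & _).
  apply (no_pentagon_cover b Hb m Hm' j1 y j2 Hj1y).
  - apply (glb_between P le c b m j1); auto using glb_comm.
  - apply (glb_between P le c b m y); eauto using glb_comm.
  - apply (lub_between P le a b j2 j1); auto.
  - apply (lub_between P le a b j2 y); eauto.
Qed.

End Modular.

Section ModularSemimodular.
Context {U : Type} (P : U -> Prop) (le : U -> U -> Prop).
Hypothesis (Hlat : lattice P le) (Hmod : modular P le).

Let Hpo : poset P le := proj1 Hlat.

Lemma modular_cover_join a b c j :
  P c -> b <> c -> covers P le a b -> covers P le a c -> is_lub P le b c j -> covers P le b j.
Proof.
  pose proof Hpo as (Hrefl & Hanti & Htrans).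
  intros Hc Hne_bc Hab Hac Hj.
  pose proof Hab as (Ha & Hb & Hle_ab & Hne_ab & Hbetween_ab).
  pose proof Hac as (_ & _ & Hle_ac & Hne_ac & Hbetween_ac).
  pose proof Hj as (Hj' & Hbj & Hcj & Hleast).
  repeat split; auto.
  - intros ->. destruct (Hbetween_ab c Hc Hle_ac Hcj) as [-> | ->]; auto.
  - intros z Hz Hbz Hzj.
    destruct (lattice_has_meet P le c z Hlat Hc Hz) as [m Hm].
    pose proof Hm as (Hm' & Hmc & Hmz & Hgreatest).
    destruct (lattice_has_join P le b m Hlat Hb Hm') as [j1 Hj1].
    (* modularity: b v (c ^ z) = (b v c) ^ z = z *)
    assert (Hzjz : is_glb P le j z z) by (repeat split; auto; intros w _ _ Hwz; exact Hwz).
    assert (Hj1z : j1 = z) by exact (Hmod b c z m j1 j z Hb Hc Hz Hbz Hm Hj1 Hj Hzjz).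
    subst j1.
    assert (Ham : le a m) by (apply Hgreatest; auto; apply Htrans with b; auto).
    destruct (Hbetween_ac m Hm' Ham Hmc) as [-> | ->].
    + left. apply (lub_unique P le b a); auto using lub_of_le, lub_comm.
    + right. exact (lub_unique P le b c z j Hpo Hj1 Hj).
Qed.

Lemma modular_semimodular : semimodular P le.
Proof.
  intros a b c j Ha Hb Hc Hne_bc Hab Hac Hj. split.
  - exact (modular_cover_join a b c j Hc Hne_bc Hab Hac Hj).
  - exact (modular_cover_join a c b j Hb (not_eq_sym Hne_bc) Hac Hab (lub_comm P le b c j Hj)).
Qed.

End ModularSemimodular.

(** * Glued sums *)

Lemma finite_union {A B : Type} (l : list A) (F : A -> B -> Prop) :
  (forall s, In s l -> exists ls, forall d, F s d -> In d ls) ->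
  exists L, forall s d, In s l -> F s d -> In d L.
Proof.
  induction l as [|s0 l IH]; intros Hfin; [exists nil; intros s d [] |].
  destruct (Hfin s0 (or_introl eq_refl)) as [l0 Hl0].
  destruct IH as [L HL]; [intros s Hs; apply Hfin; now right |].
  exists (l0 ++ L). intros s d [<- | Hs] Hd; apply in_or_app; [left | right]; eauto.
Qed.

Section GluedSum.
Context {S U : Type} (leS : S -> S -> Prop) (Lc : S -> U -> Prop) (le : S -> U -> U -> Prop).
Hypothesis (HSlat : lattice fullset leS) (HSfl : finite_length fullset leS).
Hypothesis (HG : glued_system leS Lc le).

Local Notation gle := (glued_le Lc le).
Local Notation gcar := (glued_carrier Lc).

Let HSpo : poset fullset leS := proj1 HSlat.

Lemma leS_refl x : leS x x.
Proof. now apply HSpo. Qed.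

Lemma leS_antisym x y : leS x y -> leS y x -> x = y.
Proof. intros. now apply HSpo. Qed.

Lemma leS_trans x y z : leS x y -> leS y z -> leS x z.
Proof. intros. now apply (proj2 (proj2 HSpo)) with y. Qed.

Lemma index_join_exists x y : exists j, is_lub fullset leS x y j.
Proof. now apply lattice_has_join. Qed.

Lemma index_meet_exists x y : exists m, is_glb fullset leS x y m.
Proof. now apply lattice_has_meet. Qed.

Lemma level_lattice x : lattice (Lc x) (le x).
Proof. apply HG. Qed.

Lemma level_finite_length x : finite_length (Lc x) (le x).
Proof. apply HG. Qed.

Lemma level_poset x : poset (Lc x) (le x).
Proof. apply level_lattice. Qed.

Lemma level_refl x a : Lc x a -> le x a a.
Proof. apply level_poset. Qed.

Lemma level_antisym x a b : Lc x a -> Lc x b -> le x a b -> le x b a -> a = b.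
Proof. apply level_poset. Qed.

Lemma level_trans x a b c : Lc x a -> Lc x b -> Lc x c -> le x a b -> le x b c -> le x a c.
Proof. apply level_poset. Qed.

Lemma level_join_exists x a b : Lc x a -> Lc x b -> exists j, is_lub (Lc x) (le x) a b j.
Proof. apply lattice_has_join, level_lattice. Qed.

Lemma level_bottom x : exists o, Lc x o /\ forall z, Lc x z -> le x o z.
Proof. apply lattice_has_bottom; auto using level_poset, level_finite_length, level_lattice. Qed.

Lemma overlap_ideal x y c d : leS x y -> Lc x c -> Lc y c -> Lc y d -> le y d c -> Lc x d.
Proof.
  intros Hxy Hxc Hyc Hyd Hdc. destruct HG as (_ & Hfi & _).
  destruct (Hfi x y Hxy (ex_intro _ c (conj Hxc Hyc))) as (_ & _ & _ & Hdown & _).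
  exact (proj1 (Hdown c d (conj Hxc Hyc) Hyd Hdc)).
Qed.

Lemma overlap_filter x y c d : leS x y -> Lc x c -> Lc y c -> Lc x d -> le x c d -> Lc y d.
Proof.
  intros Hxy Hxc Hyc Hxd Hcd. destruct HG as (_ & Hfi & _).
  destruct (Hfi x y Hxy (ex_intro _ c (conj Hxc Hyc))) as ((_ & _ & Hup & _) & _).
  exact (proj2 (Hup c d (conj Hxc Hyc) Hxd Hcd)).
Qed.

Lemma overlap_lub x y a b j : leS x y -> Lc x a -> Lc y a -> Lc x b -> Lc y b ->
  is_lub (Lc y) (le y) a b j -> Lc x j.
Proof.
  intros Hxy Hxa Hya Hxb Hyb Hj. destruct HG as (_ & Hfi & _).
  destruct (Hfi x y Hxy (ex_intro _ a (conj Hxa Hya))) as (_ & _ & _ & _ & Hjoin).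
  exact (proj1 (Hjoin a b j (conj Hxa Hya) (conj Hxb Hyb) Hj)).
Qed.

Lemma overlap_le_iff x y a b : leS x y -> Lc x a -> Lc y a -> Lc x b -> Lc y b ->
  (le x a b <-> le y a b).
Proof. destruct HG as (_ & _ & Hagree & _). apply Hagree. Qed.

Lemma overlap_meet_index x y m a : Lc x a -> Lc y a -> is_glb fullset leS x y m -> Lc m a.
Proof.
  intros Hxa Hya Hm. destruct HG as (_ & _ & _ & _ & Hmj).
  destruct (index_join_exists x y) as [j Hj]. now apply (Hmj x y m j a).
Qed.

Lemma overlap_join_index x y j a : Lc x a -> Lc y a -> is_lub fullset leS x y j -> Lc j a.
Proof.
  intros Hxa Hya Hj. destruct HG as (_ & _ & _ & _ & Hmj).
  destruct (index_meet_exists x y) as [m Hm]. now apply (Hmj x y m j a).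
Qed.

Lemma overlap_le x y a b : Lc x a -> Lc y a -> Lc x b -> Lc y b -> le x a b -> le y a b.
Proof.
  intros Hxa Hya Hxb Hyb Hab. destruct (index_meet_exists x y) as [m Hm].
  pose proof Hm as (_ & Hmx & Hmy & _).
  assert (Hma : Lc m a) by (apply (overlap_meet_index x y m a); auto).
  assert (Hmb : Lc m b) by (apply (overlap_meet_index x y m b); auto).
  apply (overlap_le_iff m y); auto. apply (overlap_le_iff m x); auto.
Qed.

Lemma overlap_of_covers x y : covers fullset leS x y -> exists a, Lc x a /\ Lc y a.
Proof. destruct HG as (_ & _ & _ & Hcov & _). apply Hcov. Qed.

Lemma level_convex_cover u w v a : leS u w -> covers fullset leS w v -> Lc u a -> Lc v a -> Lc w a.
Proof.
  intros Huw Hwv Hua Hva. pose proof Hwv as (_ & _ & Hle_wv & _).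
  destruct (overlap_of_covers w v Hwv) as (c & Hwc & Hvc).
  destruct (level_bottom v) as (o & Hvo & Hbot).
  (* the bottom of L_v lies in L_w and in L_u, below a *)
  assert (Hwo : Lc w o) by (apply (overlap_ideal w v c o); auto).
  assert (Huv : leS u v) by (eapply leS_trans; eauto).
  assert (Huo : Lc u o) by (apply (overlap_ideal u v a o); auto).
  apply (overlap_filter u w o a); auto. apply (overlap_le_iff u v); auto.
Qed.

Lemma level_convex u w v a : Lc u a -> Lc v a -> leS u w -> leS w v -> Lc w a.
Proof.
  intros Hua Hva Huw Hwv. revert w Huw Hwv.
  enough (Hgen : forall v, fullset v -> Lc v a -> forall w, leS u w -> leS w v -> Lc w a)
    by exact (Hgen v I Hva).
  refine (finite_length_lt_ind fullset leS HSpo HSfl _ _). intros v' _ IH Hv'a w Huw Hwv'.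
  destruct (classic (w = v')) as [->|Hne]; auto.
  destruct (exists_cover_below fullset leS HSpo HSfl w v') as (t & Hwt & Htv'); try exact I; auto.
  pose proof Htv' as (_ & _ & Hle_tv' & Hne_tv' & _).
  apply (IH t I Hle_tv' Hne_tv'); auto.
  apply (level_convex_cover u t v'); auto. eapply leS_trans; eauto.
Qed.

Definition occurs_above (a : U) (x : S) : Prop := exists q, leS x q /\ Lc q a.
Definition occurs_below (a : U) (x : S) : Prop := exists p, leS p x /\ Lc p a.

Lemma occurs_above_here x a : Lc x a -> occurs_above a x.
Proof. intros Ha. exists x. split; auto using leS_refl. Qed.

Lemma occurs_below_here x a : Lc x a -> occurs_below a x.
Proof. intros Ha. exists x. split; auto using leS_refl. Qed.

Lemma occurs_above_gle a b x : gle a b -> occurs_above a x -> occurs_above b x.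
Proof.
  intros Hab. induction Hab as [a b (y & Hya & Hyb & Hab) | a c b _ IH1 _ IH2]; auto.
  intros (q & Hxq & Hqa). destruct (index_join_exists q y) as [j Hj].
  pose proof Hj as (_ & Hqj & Hyj & _).
  assert (Hja : Lc j a) by (apply (overlap_join_index q y j a); auto).
  exists j. split; [apply leS_trans with q; auto | apply (overlap_filter y j a b); auto].
Qed.

Lemma occurs_below_gle a b x : gle a b -> occurs_below b x -> occurs_below a x.
Proof.
  intros Hab. induction Hab as [a b (y & Hya & Hyb & Hab) | a c b _ IH1 _ IH2]; auto.
  intros (p & Hpx & Hpb). destruct (index_meet_exists p y) as [m Hm].
  pose proof Hm as (_ & Hmp & Hmy & _).
  assert (Hmb : Lc m b) by (apply (overlap_meet_index p y m b); auto).
  exists m. split; [apply leS_trans with p; auto | apply (overlap_ideal m y b a); auto].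
Qed.

Lemma level_of_occurs a x : occurs_above a x -> occurs_below a x -> Lc x a.
Proof. intros (q & Hxq & Hqa) (p & Hpx & Hpa). now apply (level_convex p x q). Qed.

Lemma gle_of_le x a b : Lc x a -> Lc x b -> le x a b -> gle a b.
Proof. intros. apply t_step. now exists x. Qed.

Lemma gle_level_between a b x :
  gle a b -> occurs_above a x -> occurs_below b x -> Lc x a /\ Lc x b /\ le x a b.
Proof.
  intros Hab. induction Hab as [a b (y & Hya & Hyb & Hab) | a c b Hac IH1 Hcb IH2]; intros Ha Hb.
  - assert (Hxa : Lc x a).
    { apply level_of_occurs; auto. apply (occurs_below_gle a b x); auto. now apply (gle_of_le y). }
    assert (Hxb : Lc x b).
    { apply level_of_occurs; auto. apply (occurs_above_gle a b x); auto. now apply (gle_of_le y). }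
    repeat split; auto. now apply (overlap_le y x).
  - assert (Hc_above : occurs_above c x) by (now apply (occurs_above_gle a c x)).
    assert (Hc_below : occurs_below c x) by (now apply (occurs_below_gle c b x)).
    destruct (IH1 Ha Hc_below) as (Hxa & Hxc & Hle_ac).
    destruct (IH2 Hc_above Hb) as (_ & Hxb & Hle_cb).
    repeat split; auto. now apply (level_trans x a c b).
Qed.

Lemma gle_level x a b : gle a b -> Lc x a -> Lc x b -> le x a b.
Proof.
  intros Hab Ha Hb.
  apply (gle_level_between a b x Hab); auto using occurs_above_here, occurs_below_here.
Qed.

Lemma glued_poset : poset gcar gle.
Proof.
  repeat split.
  - intros a [x Ha]. apply (gle_of_le x); auto using level_refl.
  - intros a b [x Ha] _ Hab Hba.
    assert (Hxb : Lc x b).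
    { apply level_of_occurs.
      - apply (occurs_above_gle a b x Hab). now apply occurs_above_here.
      - apply (occurs_below_gle b a x Hba). now apply occurs_below_here. }
    apply (level_antisym x); auto; now apply gle_level.
  - intros a b c _ _ _ Hab Hbc. now apply t_trans with b.
Qed.

(* [lift x a q v]: v is reached from a in L_x by climbing to L_q, joining at each
   intermediate index t with the bottom of the target level (which lies in L_t).
   It is the least element of L_q above a, see [lift_least]. *)
Inductive lift (x : S) (a : U) : S -> U -> Prop :=
| lift_here : Lc x a -> lift x a x a
| lift_up t q u o v : lift x a t u -> leS t q -> t <> q ->
    Lc q o -> (forall z, Lc q z -> le q o z) -> Lc t o ->
    is_lub (Lc t) (le t) u o v -> lift x a q v.

Lemma lift_spec x a q v : lift x a q v -> Lc x a /\ leS x q /\ Lc q v /\ gle a v.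
Proof.
  intros Hl. induction Hl as [Ha | t q u o v _ (Ha & Hxt & Htu & Hau) Htq _ Hqo _ Hto Hv].
  - repeat split; auto using leS_refl. apply (gle_of_le x); auto using level_refl.
  - pose proof Hv as (Htv & Huv & Hov & _). repeat split; auto.
    + now apply leS_trans with t.
    + now apply (overlap_filter t q o v).
    + apply t_trans with u; auto. now apply (gle_of_le t).
Qed.

Lemma lift_level x a q v : lift x a q v -> Lc q v.
Proof. intros Hl. apply (lift_spec x a q v Hl). Qed.

Lemma lift_exists x a q : Lc x a -> leS x q -> exists v, lift x a q v.
Proof.
  intros Ha. revert q.
  enough (Hgen : forall q, fullset q -> leS x q -> exists v, lift x a q v) by (intros q; exact (Hgen q I)).
  refine (finite_length_lt_ind fullset leS HSpo HSfl _ _). intros q _ IH Hxq.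
  destruct (classic (x = q)) as [<-|Hne]; [exists a; now constructor |].
  destruct (exists_cover_below fullset leS HSpo HSfl x q) as (s & Hxs & Hsq); try exact I; auto.
  pose proof Hsq as (_ & _ & Hle_sq & Hne_sq & _).
  destruct (IH s I Hle_sq Hne_sq Hxs) as [u Hu].
  destruct (overlap_of_covers s q Hsq) as (c & Hsc & Hqc).
  destruct (level_bottom q) as (o & Hqo & Hbot).
  assert (Hso : Lc s o) by (apply (overlap_ideal s q c o); auto).
  destruct (level_join_exists s u o) as [v Hv]; [exact (lift_level x a s u Hu) | exact Hso |].
  exists v. now apply (lift_up x a s q u o v).
Qed.

Lemma lift_le_overlap t u q v e :
  lift t u q v -> Lc t e -> Lc q e -> le t u e -> le q v e.
Proof.
  intros Hl. induction Hl as [Hu | t' q u' o v Hl IH Ht'q _ Hqo Hbot Ht'o Hv];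
    intros Hte Hqe Hue; auto.
  destruct (lift_spec t u t' u' Hl) as (_ & Htt' & Ht'u' & _).
  assert (Ht'e : Lc t' e) by (apply (level_convex t t' q e); auto).
  pose proof Hv as (Ht'v & _ & Hov & Hleast).
  apply (overlap_le_iff t' q); auto.
  - now apply (overlap_filter t' q o v).
  - apply Hleast; auto. apply (overlap_le_iff t' q); auto.
Qed.

Lemma lift_trans t u q v : lift t u q v -> forall x a, lift x a t u -> lift x a q v.
Proof.
  intros Hl. induction Hl as [Hu | t' q u' o v _ IH Ht'q Hne Hqo Hbot Ht'o Hv]; intros x a Hxa; auto.
  apply (lift_up x a t' q u' o v); auto.
Qed.

Lemma lift_mono t u q v d :
  lift t u q v -> Lc t d -> le t u d -> exists w, lift t d q w /\ le q v w.
Proof.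
  intros Hl. induction Hl as [Hu | t' q u' o v Hl IH Ht'q Hne Hqo Hbot Ht'o Hv]; intros Hd Hud.
  - exists d. split; [now constructor | exact Hud].
  - destruct (IH Hd Hud) as (w' & Hw' & Hu'w').
    assert (Ht'w' : Lc t' w') by exact (lift_level t d t' w' Hw').
    assert (Ht'u' : Lc t' u') by exact (lift_level t u t' u' Hl).
    destruct (level_join_exists t' w' o) as [w Hw]; auto.
    exists w. split; [now apply (lift_up t d t' q w' o w) |].
    pose proof Hw as (Ht'w & Hw'w & How & _). pose proof Hv as (Ht'v & _ & Hov & Hleast).
    assert (Hvw : le t' v w) by (apply Hleast; auto; now apply (level_trans t' u' w' w)).
    apply (overlap_le_iff t' q); auto.
    + now apply (overlap_filter t' q o v).
    + now apply (overlap_filter t' q o w).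
Qed.

Lemma level_lub_up t q a b j : leS t q -> Lc t a -> Lc q a -> Lc t b -> Lc q b ->
  is_lub (Lc t) (le t) a b j -> is_lub (Lc q) (le q) a b j.
Proof.
  intros Htq Hta Hqa Htb Hqb Hj. pose proof Hj as (Htj & Haj & Hbj & Hleast).
  destruct (level_join_exists q a b) as [j' Hj']; auto.
  pose proof Hj' as (Hqj' & Haj' & Hbj' & Hleast').
  assert (Htj' : Lc t j') by (now apply (overlap_lub t q a b j')).
  assert (Hqj : Lc q j) by (now apply (overlap_filter t q a j)).
  replace j with j'; auto. apply (level_antisym q); auto.
  - apply Hleast'; auto; now apply (overlap_le_iff t q).
  - apply (overlap_le_iff t q); auto. apply Hleast; auto; now apply (overlap_le_iff t q).
Qed.

Lemma lift_join_through_meet x a t1 t2 m u1 u0 o v1 :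
  (forall u u', lift x a t1 u -> lift x a t1 u' -> u = u') ->
  lift x a t1 u1 -> lift x a m u0 -> Lc t1 o -> Lc t2 o -> is_glb fullset leS t1 t2 m ->
  is_lub (Lc t1) (le t1) u1 o v1 -> is_lub (Lc m) (le m) u0 o v1.
Proof.
  intros Huniq Hu1 Hu0 Ht1o Ht2o Hm Hv1. pose proof Hm as (_ & Hmt1 & Hmt2 & _).
  assert (Hmo : Lc m o) by (now apply (overlap_meet_index t1 t2 m o)).
  assert (Hmu0 : Lc m u0) by exact (lift_level x a m u0 Hu0).
  destruct (classic (m = t1)) as [->|Hne]; [now rewrite (Huniq u0 u1 Hu0 Hu1) |].
  (* lift u0 one more step, to t1, through the bottom o' of L_t1 *)
  destruct (level_bottom t1) as (o' & Ht1o' & Hbot).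
  assert (Hmo' : Lc m o') by (apply (overlap_ideal m t1 o o'); auto).
  destruct (level_join_exists m u0 o') as [u' Hu']; auto.
  assert (Hlift' : lift x a t1 u') by (now apply (lift_up x a m t1 u0 o' u')).
  rewrite (Huniq u1 u' Hu1 Hlift') in Hv1.
  assert (Hmu' : Lc m u') by apply Hu'.
  destruct (level_join_exists m u' o) as [j Hj]; auto.
  assert (Hj1 : is_lub (Lc t1) (le t1) u' o j)
    by (apply (level_lub_up m t1); auto; exact (lift_level x a t1 u' Hlift')).
  rewrite (lub_unique (Lc t1) (le t1) u' o v1 j (level_poset t1) Hv1 Hj1).
  apply (lub_absorb (Lc m) (le m) u0 o o' u' j); auto using level_poset.
  apply (overlap_le_iff m t1); auto.
Qed.

Lemma lift_unique q x a v w : lift x a q v -> lift x a q w -> v = w.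
Proof.
  revert x a v w.
  enough (Hgen : forall q, fullset q -> forall x a v w, lift x a q v -> lift x a q w -> v = w)
    by exact (Hgen q I).
  clear q. refine (finite_length_lt_ind fullset leS HSpo HSfl _ _). intros q _ IH x a v w Hv Hw.
  inversion Hv as [Ha | t1 q1 u1 o1 v1 Hu1 Ht1q Hne1 Hqo1 Hbot1 Ht1o1 Hv1]; subst;
    inversion Hw as [Ha' | t2 q2 u2 o2 w2 Hu2 Ht2q Hne2 Hqo2 Hbot2 Ht2o2 Hw2]; subst; auto.
  - exfalso. apply Hne2, leS_antisym; auto. now apply (lift_spec _ _ t2 u2 Hu2).
  - exfalso. apply Hne1, leS_antisym; auto. now apply (lift_spec _ _ t1 u1 Hu1).
  - assert (o1 = o2) as <- by (apply (level_antisym q); auto).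
    destruct (index_meet_exists t1 t2) as [m Hm]. pose proof Hm as (_ & Hmt1 & Hmt2 & Hgreatest).
    destruct (lift_spec x a t1 u1 Hu1) as (Hxa & Hxt1 & _).
    destruct (lift_spec x a t2 u2 Hu2) as (_ & Hxt2 & _).
    destruct (lift_exists x a m) as [u0 Hu0]; auto. { apply Hgreatest; auto. exact I. }
    apply (lub_unique (Lc m) (le m) u0 o1 v w (level_poset m)).
    + apply (lift_join_through_meet x a t1 t2 m u1 u0 o1 v); auto.
      intros u u'. now apply (IH t1 I).
    + apply (lift_join_through_meet x a t2 t1 m u2 u0 o1 w); auto using glb_comm.
      intros u u'. now apply (IH t2 I).
Qed.

Lemma lift_least_step x a y e q v :
  Lc y a -> Lc y e -> le y a e -> Lc x a -> Lc q e -> leS x q -> lift x a q v -> le q v e.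
Proof.
  intros Hya Hye Hae Hxa Hqe Hxq Hv.
  (* pass through t = (y ^ q) v x, which holds both a and e *)
  destruct (index_meet_exists y q) as [m Hm]. pose proof Hm as (_ & Hmy & Hmq & _).
  assert (Hme : Lc m e) by (now apply (overlap_meet_index y q m e)).
  assert (Hma : Lc m a) by (apply (overlap_ideal m y e a); auto).
  assert (Hle_mae : le m a e) by (apply (overlap_le_iff m y); auto).
  destruct (index_join_exists m x) as [t Ht]. pose proof Ht as (_ & Hmt & Hxt & Hleast).
  assert (Hta : Lc t a) by (now apply (overlap_join_index m x t a)).
  assert (Hte : Lc t e) by (now apply (overlap_filter m t a e)).
  assert (Hle_tae : le t a e) by (apply (overlap_le_iff m t); auto).
  assert (Htq : leS t q) by (apply Hleast; auto; exact I).
  destruct (lift_exists x a t Hxa Hxt) as [w Hw].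
  assert (Hwa : le t w a) by (apply (lift_le_overlap x a t w a); auto using level_refl).
  destruct (lift_exists t w q) as [v' Hv']; auto. { exact (lift_level x a t w Hw). }
  rewrite (lift_unique q x a v v' Hv (lift_trans t w q v' Hv' x a Hw)).
  apply (lift_le_overlap t w q v' e); auto.
  apply (level_trans t w a e); auto. exact (lift_level x a t w Hw).
Qed.

Lemma index_between d x q :
  occurs_above d x -> occurs_below d q -> leS x q -> exists t, leS x t /\ leS t q /\ Lc t d.
Proof.
  intros (r & Hxr & Hrd) (p & Hpq & Hpd) Hxq.
  destruct (index_join_exists p r) as [j Hj]. pose proof Hj as (_ & Hpj & Hrj & _).
  destruct (index_join_exists p x) as [t Ht]. pose proof Ht as (_ & Hpt & Hxt & Hleast).
  assert (Hjd : Lc j d) by (now apply (overlap_join_index p r j d)).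
  exists t. repeat split; auto.
  - apply Hleast; auto. exact I.
  - apply (level_convex p t j); auto. apply Hleast; auto; [exact I | now apply leS_trans with r].
Qed.

Lemma lift_least a e : gle a e -> forall x q v,
  Lc x a -> Lc q e -> leS x q -> lift x a q v -> le q v e.
Proof.
  intros Hae. induction Hae as [a e (y & Hya & Hye & Hle) | a d e Had IH1 Hde IH2];
    intros x q v Hxa Hqe Hxq Hv.
  - now apply (lift_least_step x a y e q v).
  - destruct (index_between d x q) as (t & Hxt & Htq & Htd); auto.
    { apply (occurs_above_gle a d x Had). now apply occurs_above_here. }
    { apply (occurs_below_gle d e q Hde). now apply occurs_below_here. }
    destruct (lift_exists x a t Hxa Hxt) as [w Hw].
    assert (Htw : Lc t w) by exact (lift_level x a t w Hw).
    assert (Hwd : le t w d) by (now apply (IH1 x t w)).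
    destruct (lift_exists t d q Htd Htq) as [vd Hvd].
    assert (Hvde : le q vd e) by (now apply (IH2 t q vd)).
    destruct (lift_exists t w q Htw Htq) as [v' Hv'].
    destruct (lift_mono t w q v' d Hv' Htd Hwd) as (w' & Hw' & Hv'w').
    rewrite (lift_unique q t d w' vd Hw' Hvd) in Hv'w'.
    rewrite (lift_unique q x a v v' Hv (lift_trans t w q v' Hv' x a Hw)).
    apply (level_trans q v' vd e); auto.
    + exact (lift_level t w q v' Hv').
    + exact (lift_level t d q vd Hvd).
Qed.

Lemma lift_lub z c q v c1 c2 :
  lift z c q v -> Lc z c1 -> Lc z c2 -> is_lub (Lc z) (le z) c1 c2 c ->
  exists v1 v2, lift z c1 q v1 /\ lift z c2 q v2 /\ is_lub (Lc q) (le q) v1 v2 v.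
Proof.
  intros Hl. induction Hl as [Hzc | t q u o v Hl IH Htq Hne Hqo Hbot Hto Hv]; intros Hc1 Hc2 Hc.
  - exists c1, c2. split; [now constructor | split; [now constructor | exact Hc]].
  - destruct (IH Hc1 Hc2 Hc) as (v1 & v2 & Hl1 & Hl2 & Hu).
    assert (Htv1 : Lc t v1) by exact (lift_level z c1 t v1 Hl1).
    assert (Htv2 : Lc t v2) by exact (lift_level z c2 t v2 Hl2).
    destruct (level_join_exists t v1 o) as [v1' Hv1']; auto.
    destruct (level_join_exists t v2 o) as [v2' Hv2']; auto.
    assert (Hl1' : lift z c1 q v1') by (now apply (lift_up z c1 t q v1 o v1')).
    assert (Hl2' : lift z c2 q v2') by (now apply (lift_up z c2 t q v2 o v2')).
    exists v1', v2'. split; [exact Hl1' | split; [exact Hl2' |]].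
    apply (level_lub_up t q); auto.
    + apply Hv1'.
    + exact (lift_level z c1 q v1' Hl1').
    + apply Hv2'.
    + exact (lift_level z c2 q v2' Hl2').
    + now apply (lub_of_joins_with (Lc t) (le t) v1 v2 o u v v1' v2' (level_poset t)).
Qed.

Lemma glued_lub_of_lifts x y z a b ua ub j :
  Lc x a -> Lc y b -> is_lub fullset leS x y z ->
  lift x a z ua -> lift y b z ub -> is_lub (Lc z) (le z) ua ub j -> is_lub gcar gle a b j.
Proof.
  intros Hxa Hyb Hz Hua Hub Hj. pose proof Hj as (Hzj & Huaj & Hubj & _).
  pose proof Hz as (_ & Hxz & Hyz & Hleastz).
  destruct (lift_spec x a z ua Hua) as (_ & _ & Hzua & Haua).
  destruct (lift_spec y b z ub Hub) as (_ & _ & Hzub & Hbub).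
  repeat split.
  - now exists z.
  - apply t_trans with ua; auto. now apply (gle_of_le z).
  - apply t_trans with ub; auto. now apply (gle_of_le z).
  - intros e He Hae Hbe.
    (* compare inside a level w above x, y and containing e *)
    destruct (occurs_above_gle a e x Hae (occurs_above_here x a Hxa)) as (r & Hxr & Hre).
    destruct (occurs_above_gle b e y Hbe (occurs_above_here y b Hyb)) as (r' & Hyr' & Hr'e).
    destruct (index_join_exists r r') as [w Hw]. pose proof Hw as (_ & Hrw & Hr'w & _).
    assert (Hwe : Lc w e) by (now apply (overlap_join_index r r' w e)).
    assert (Hzw : leS z w)
      by (apply Hleastz; [exact I | now apply leS_trans with r | now apply leS_trans with r']).
    destruct (lift_exists z j w Hzj Hzw) as [vj Hvj].
    destruct (lift_lub z j w vj ua ub Hvj Hzua Hzub Hj) as (v1 & v2 & Hv1 & Hv2 & Hv).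
    assert (Hv1e : le w v1 e).
    { apply (lift_least a e Hae x w v1); auto; [now apply leS_trans with z | now apply (lift_trans z ua)]. }
    assert (Hv2e : le w v2 e).
    { apply (lift_least b e Hbe y w v2); auto; [now apply leS_trans with z | now apply (lift_trans z ub)]. }
    destruct (lift_spec z j w vj Hvj) as (_ & _ & Hwvj & Hjvj).
    apply t_trans with vj; auto. apply (gle_of_le w); auto. apply Hv; auto.
Qed.

Lemma glued_join_exists a b : gcar a -> gcar b -> exists j, is_lub gcar gle a b j.
Proof.
  intros [x Hxa] [y Hyb]. destruct (index_join_exists x y) as [z Hz].
  pose proof Hz as (_ & Hxz & Hyz & _).
  destruct (lift_exists x a z Hxa Hxz) as [ua Hua].
  destruct (lift_exists y b z Hyb Hyz) as [ub Hub].
  destruct (level_join_exists z ua ub) as [j Hj].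
  - exact (lift_level x a z ua Hua).
  - exact (lift_level y b z ub Hub).
  - exists j. now apply (glued_lub_of_lifts x y z a b ua ub j).
Qed.

Definition min_index (d : U) (s : S) : Prop := Lc s d /\ forall s', Lc s' d -> leS s s'.

Lemma min_index_exists x d : Lc x d -> exists s, min_index d s.
Proof.
  revert x. enough (Hgen : forall x, fullset x -> Lc x d -> exists s, min_index d s)
    by (intros x; exact (Hgen x I)).
  refine (finite_length_lt_ind fullset leS HSpo HSfl _ _). intros x _ IH Hxd.
  destruct (classic (forall s', Lc s' d -> leS x s')) as [Hmin|Hnmin]; [now exists x |].
  apply not_all_ex_not in Hnmin as [s' Hs']. apply imply_to_and in Hs' as [Hs'd Hnxs'].
  destruct (index_meet_exists x s') as [m Hm]. pose proof Hm as (_ & Hmx & Hms' & _).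
  apply (IH m I Hmx).
  - intros ->. contradiction.
  - now apply (overlap_meet_index x s' m d).
Qed.

Lemma min_index_mono d d' s s' : gle d d' -> min_index d s -> min_index d' s' -> leS s s'.
Proof.
  intros Hdd' [Hsd Hmin] [Hs'd' _].
  destruct (occurs_below_gle d d' s' Hdd' (occurs_below_here s' d' Hs'd')) as (p & Hps' & Hpd).
  apply leS_trans with p; auto.
Qed.

Lemma glued_finite_length : finite_length gcar gle.
Proof.
  intros C [HCcar HCcmp].
  (* the minimal indices of a chain form a chain of S, and each level meets C in a chain *)
  destruct (HSfl (fun s => exists d, C d /\ min_index d s)) as [ls Hls].
  { split; [intros; exact I |].
    intros s s' (d & Hd & Hs) (d' & Hd' & Hs').
    destruct (HCcmp d d' Hd Hd'); [left | right]; eapply min_index_mono; eauto. }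
  destruct (finite_union ls (fun s d => C d /\ min_index d s)) as [L HL].
  { intros s _. apply (level_finite_length s). split; [intros d (_ & Hsd & _); exact Hsd |].
    intros d d' (Hd & Hsd & _) (Hd' & Hsd' & _).
    destruct (HCcmp d d' Hd Hd'); [left | right]; now apply gle_level. }
  exists L. intros d Hd. destruct (HCcar d Hd) as [x Hxd].
  destruct (min_index_exists x d Hxd) as [s Hs].
  apply (HL s d); auto. apply Hls. eauto.
Qed.

Lemma lift_covers_level x a w u :
  lift x a w u -> covers gcar gle a u -> exists s, Lc s a /\ Lc s u.
Proof.
  intros Hl. induction Hl as [Ha | t q u' o v Hl IH _ _ _ _ _ Hv]; intros Hcov.
  - exfalso. now apply Hcov.
  - destruct (lift_spec x a t u' Hl) as (_ & _ & Htu' & Hau').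
    pose proof Hv as (Htv & Hu'v & _). pose proof Hcov as (_ & _ & _ & _ & Hbetween).
    destruct (Hbetween u') as [-> | ->]; auto.
    + now exists t.
    + apply (gle_of_le t); auto.
    + now exists t.
Qed.

Lemma glued_covers_level a b : covers gcar gle a b -> exists s, Lc s a /\ Lc s b.
Proof.
  intros Hcov. pose proof Hcov as ([x Hxa] & [y Hyb] & Hab & _ & Hbetween).
  destruct (occurs_above_gle a b x Hab (occurs_above_here x a Hxa)) as (r & Hxr & Hrb).
  destruct (index_join_exists x y) as [w Hw]. pose proof Hw as (_ & Hxw & Hyw & Hleastw).
  destruct (index_join_exists r y) as [j Hj]. pose proof Hj as (_ & Hrj & Hyj & _).
  assert (Hjb : Lc j b) by (now apply (overlap_join_index r y j b)).
  assert (Hwb : Lc w b).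
  { apply (level_convex y w j b); auto. apply Hleastw; auto; [exact I | now apply leS_trans with r]. }
  destruct (lift_exists x a w Hxa Hxw) as [u Hu].
  destruct (lift_spec x a w u Hu) as (_ & _ & Hwu & Hau).
  assert (Hub : le w u b) by (now apply (lift_least a b Hab x w u)).
  destruct (Hbetween u) as [-> | ->].
  - now exists w.
  - exact Hau.
  - now apply (gle_of_le w).
  - now exists w.
  - now apply (lift_covers_level x a w b).
Qed.

Lemma level_covers_of_glued s a b :
  covers gcar gle a b -> Lc s a -> Lc s b -> covers (Lc s) (le s) a b.
Proof.
  intros (_ & _ & Hab & Hne & Hbetween) Hsa Hsb. repeat split; auto.
  - now apply gle_level.
  - intros z Hsz Haz Hzb. apply Hbetween; [now exists s | apply (gle_of_le s) ..]; auto.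
Qed.

Lemma glued_covers_of_level s a b : covers (Lc s) (le s) a b -> covers gcar gle a b.
Proof.
  intros (Hsa & Hsb & Hab & Hne & Hbetween). repeat split; auto.
  - now exists s.
  - now exists s.
  - now apply (gle_of_le s).
  - intros z _ Haz Hzb.
    assert (Hsz : Lc s z).
    { apply level_of_occurs.
      - apply (occurs_above_gle a z s Haz). now apply occurs_above_here.
      - apply (occurs_below_gle z b s Hzb). now apply occurs_below_here. }
    apply Hbetween; auto; now apply gle_level.
Qed.

Lemma glued_semimodular : (forall x, semimodular (Lc x) (le x)) -> semimodular gcar gle.
Proof.
  intros Hsm a b c j Ha Hb Hc Hne Hab Hac Hj.
  destruct (glued_covers_level a b Hab) as (s1 & Hs1a & Hs1b).
  destruct (glued_covers_level a c Hac) as (s2 & Hs2a & Hs2c).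
  (* both covers live in the level w = s1 v s2 *)
  destruct (index_join_exists s1 s2) as [w Hw]. pose proof Hw as (_ & Hs1w & Hs2w & _).
  assert (Hwa : Lc w a) by (now apply (overlap_join_index s1 s2 w a)).
  assert (Hwb : Lc w b) by (apply (overlap_filter s1 w a b); auto; apply gle_level; auto; apply Hab).
  assert (Hwc : Lc w c) by (apply (overlap_filter s2 w a c); auto; apply gle_level; auto; apply Hac).
  destruct (level_join_exists w b c Hwb Hwc) as [j' Hj'].
  assert (Hww : is_lub fullset leS w w w) by (apply lub_of_le; auto using leS_refl; exact I).
  assert (Hglued_j' : is_lub gcar gle b c j')
    by (apply (glued_lub_of_lifts w w w b c b c j'); auto; now constructor).
  rewrite (lub_unique gcar gle b c j j' glued_poset Hj Hglued_j').
  destruct (Hsm w a b c j') as [Hbj' Hcj']; auto using level_covers_of_glued.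
  split; now apply (glued_covers_of_level w).
Qed.

End GluedSum.

(** * Duality *)

Section GluedDual.
Context {S U : Type} (leS : S -> S -> Prop) (Lc : S -> U -> Prop) (le : S -> U -> U -> Prop).

Lemma glued_system_dual :
  glued_system leS Lc le -> glued_system (dual leS) Lc (fun x => dual (le x)).
Proof.
  intros (Hlevels & Hfi & Hagree & Hcov & Hmj).
  assert (Hswap : forall x y a, Lc y a /\ Lc x a <-> Lc x a /\ Lc y a) by (intros; tauto).
  split; [| split; [| split; [| split]]].
  - intros x. split; [apply lattice_dual | apply finite_length_dual]; apply Hlevels.
  - intros x y Hyx [a [Hxa Hya]].
    destruct (Hfi y x Hyx (ex_intro _ a (conj Hya Hxa))) as [Hfilter Hideal].
    split; now apply (filter_of_ext _ _ _ _ (Hswap x y)).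
  - intros x y a b Hyx Hxa Hya Hxb Hyb. symmetry. now apply (Hagree y x b a).
  - intros x y Hxy. destruct (Hcov y x (covers_dual fullset (dual leS) x y Hxy)) as (a & Hya & Hxa).
    now exists a.
  - intros x y m j a Hm Hj Hxa Hya. destruct (Hmj x y j m a); auto.
Qed.

Lemma glued_le_dual : glued_le Lc (fun x => dual (le x)) = dual (glued_le Lc le).
Proof.
  apply functional_extensionality; intros a. apply functional_extensionality; intros b.
  apply propositional_extensionality. split; intros H;
    induction H as [a b (x & Ha & Hb & Hab) | a c b _ IH1 _ IH2];
    solve [apply t_step; now exists x | now apply t_trans with c].
Qed.

End GluedDual.

Lemma glued_lattice {S U : Type} (leS : S -> S -> Prop) (Lc : S -> U -> Prop)
    (le : S -> U -> U -> Prop) :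
  lattice fullset leS -> finite_length fullset leS -> glued_system leS Lc le ->
  lattice (glued_carrier Lc) (glued_le Lc le).
Proof.
  intros HSlat HSfl HG.
  assert (HG' := glued_system_dual leS Lc le HG).
  assert (HSlat' := lattice_dual fullset leS HSlat).
  assert (HSfl' := finite_length_dual fullset leS HSfl).
  split; [exact (glued_poset leS Lc le HSlat HSfl HG) | split].
  - pose proof HSlat as (_ & [x _] & _).
    destruct (level_bottom leS Lc le HG x) as (o & Ho & _). now exists o, x.
  - intros a b Ha Hb. split; [now apply (glued_join_exists leS Lc le) |].
    destruct (glued_join_exists (dual leS) Lc (fun x => dual (le x)) HSlat' HSfl' HG' a b Ha Hb)
      as [m Hm].
    rewrite glued_le_dual in Hm. now exists m.
Qed.

Theorem theorem3p2 (S U : Type) (leS : S -> S -> Prop)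
    (Lc : S -> U -> Prop) (le : S -> U -> U -> Prop) :
  lattice fullset leS -> finite_length fullset leS ->
  glued_system leS Lc le ->
  ((forall x, semimodular (Lc x) (le x)) ->
     lattice (glued_carrier Lc) (glued_le Lc le) /\
     finite_length (glued_carrier Lc) (glued_le Lc le) /\
     semimodular (glued_carrier Lc) (glued_le Lc le)) /\
  ((forall x, modular (Lc x) (le x)) ->
     lattice (glued_carrier Lc) (glued_le Lc le) /\
     finite_length (glued_carrier Lc) (glued_le Lc le) /\
     modular (glued_carrier Lc) (glued_le Lc le)).
Proof.
  intros HSlat HSfl HG.
  assert (HL := glued_lattice leS Lc le HSlat HSfl HG).
  assert (HF := glued_finite_length leS Lc le HSlat HSfl HG).
  assert (Hlevel : forall x, lattice (Lc x) (le x)) by (intros x; apply HG).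
  split; intros Hlevels; (split; [exact HL | split; [exact HF |]]).
  - exact (glued_semimodular leS Lc le HSlat HSfl HG Hlevels).
  - (* modular = upper and lower semimodular, and the glued sum of the duals is the dual *)
    apply modular_of_semimodular_dual; auto.
    + apply (glued_semimodular leS Lc le HSlat HSfl HG).
      intros x. now apply modular_semimodular.
    + rewrite <- glued_le_dual.
      apply (glued_semimodular (dual leS) Lc (fun x => dual (le x)));
        auto using lattice_dual, finite_length_dual, glued_system_dual.
      intros x. apply modular_semimodular; auto using lattice_dual, modular_dual.
Qed.
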